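(* Let $\Delta=(\mathcal{D},\delta)$ be a program over a clocked basic action theory $\mathcal{D}$, let $K\in\mathbb{N}$ be at least as large as every natural-number constant mentioned in $\mathcal{D}$, and let $\mathcal{T}_\Delta$ be the transition system constructed by Algorithm 2 (described in the context) on input $(\mathcal{D},\delta,K)$. Then $\mathcal{T}_\Delta$ has finitely many states.
   Context: Situation calculus setting: sorts action, situation, object and time (the real numbers); $S_0$ initial situation; $\mathit{do}(a,s)$ the successor situation; $\phi[\sigma]$ is the situation-suppressed formula $\phi$ with situation argument $\sigma$ restored. Fluents are relation or function symbols with last argument a situation and other arguments objects; finitely many fluents, a finite set $\mathcal{A}$ of action types ($A$ has $|A|$ object arguments), finite set $\mathcal{O}$ of object constants (unique names, domain closure). A formula is uniform in $s$ if it mentions no situation term other than $s$ and does not mention $\mathit{Poss}$. A BAT is $\mathcal{D} = \mathcal{D}_0 \cup \mathcal{D}_{poss} \cup \mathcal{D}_{ssa} \cup \mathcal{D}_{ca} \cup \mathcal{D}_{co} \cup \Sigma$ (initial description uniform in $S_0$ with complete information, precondition axioms, successor state axioms, domain closure and unique name axioms for actions and objects, foundational axioms). Clock comparison: $f(\vec x,s)\bowtie v$ or $v\bowtie v'$ ($f$ functional fluent, $v,v'\in\mathbb{N}$, $\bowtie\in\{<,\leq,=,\geq,>\}$). Clocked formula: every atomic subformula mentioning a time term is a clock comparison; time-independent: no time term. A BAT is clocked if there is a distinguished action type $\mathit{wait}(t)$ (others have no time argument) and: functional fluents take time values and are $0$ at $S_0$; each functional fluent has successor state axiom $f(\vec o,\mathit{do}(a,s))=y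 \equiv \exists t\,(a=\mathit{wait}(t)\wedge y=f(\vec o,s)+t) \vee (\neg\exists t\, a=\mathit{wait}(t)) \wedge (\phi_f(\vec o,a,s)\wedge y=0 \vee \neg\phi_f(\vec o,a,s)\wedge y=f(\vec o,s))$ with $\phi_f$ time-independent, uniform in $s$; relational successor state axioms and precondition axioms have clocked right-hand sides uniform in $s$; $\mathit{Poss}(\mathit{wait}(t),s)\equiv\top$. $\mathcal{C}$ is the set of ground situation-suppressed clock (functional fluent) terms; $\nu_\sigma(\omega)=\tau$ iff $\mathcal{D}\models\omega[\sigma]=\tau$; $\nu+\tau$ adds $\tau$ to every value. For $u,v\geq0$: $u\sim_K v$ iff both $>K$, or both $\leq K$ with equal floors and equal ceilings; $\mathrm{fract}(v)=v-\lfloor v\rfloor$ if $v\leq K$, else $0$. $\nu\cong_K\nu'$ iff $\nu(\omega)\sim_K\nu'(\omega)$ for all $\omega$ and $\mathrm{fract}(\nu(\omega))\leq\mathrm{fract}(\nu(\omega'))$ iff $\mathrm{fract}(\nu'(\omega))\leq\mathrm{fract}(\nu'(\omega'))$ for all $\omega,\omega'$. $\sigma_1\approx_{\mathcal{D}K}\sigma_2$ iff they entail the same ground relational fluent atoms and $\nu_{\sigma_1}\cong_K\nu_{\sigma_2}$; $[\sigma]_{\approx_{\mathcal{D}K}}$ is the class of $\sigma$. $\mathrm{TSuccs}(\nu,K)$ is a computable finite set of nonnegative reals such that for every $\tau\geq0$ there is $\tau'\in\mathrm{TSuccs}(\nu,K)$ with $\nu+\tau\cong_K\nu+\tau'$.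 Golog: program expressions $\delta ::= \alpha \mid \phi? \mid \delta;\delta \mid \delta|\delta \mid \pi x.\,\delta \mid \delta^* \mid \delta\|\delta$, where action terms are time-suppressed (the program contains $\mathit{wait}()$ without argument), tests test situation-suppressed clocked formulas, and $\pi x$ chooses an object. $\mathit{nil}:=\mathrm{True}?$. A program is $\Delta=(\mathcal{D},\delta)$. Transition semantics: $\mathrm{Trans}(A(\vec\rho),s,a,\delta',s')\equiv a=A(\vec\rho)\wedge\mathit{Poss}(a,s)\wedge\delta'=\mathit{nil}\wedge s'=\mathit{do}(a,s)$ for $A\neq\mathit{wait}$; $\mathrm{Trans}(\mathit{wait}(),s,a,\delta',s')\equiv\exists t.\,a=\mathit{wait}(t)\wedge\delta'=\mathit{nil}\wedge s'=\mathit{do}(a,s)$; $\mathrm{Trans}(\phi?,\dots)\equiv\mathrm{False}$; $\mathrm{Trans}(\delta_1;\delta_2,s,a,\delta',s')\equiv\exists\gamma(\delta'=(\gamma;\delta_2)\wedge\mathrm{Trans}(\delta_1,s,a,\gamma,s'))\vee\mathrm{Final}(\delta_1,s)\wedge\mathrm{Trans}(\delta_2,s,a,\delta',s')$; $\mathrm{Trans}(\delta_1|\delta_2,\dots)\equiv\mathrm{Trans}(\delta_1,\dots)\vee\mathrm{Trans}(\delta_2,\dots)$; $\mathrm{Trans}(\pi x.\delta,s,a,\delta',s')\equiv\exists v.\,\mathrm{Trans}(\delta^x_v,s,a,\delta',s')$; $\mathrm{Trans}(\delta^*,s,a,\delta',s')\equiv\exists\gamma(\delta'=(\gamma;\delta^*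 )\wedge\mathrm{Trans}(\delta,s,a,\gamma,s'))$; $\mathrm{Trans}(\delta_1\|\delta_2,s,a,\delta',s')\equiv\exists\gamma(\delta'=(\gamma\|\delta_2)\wedge\mathrm{Trans}(\delta_1,s,a,\gamma,s'))\vee\exists\gamma(\delta'=(\delta_1\|\gamma)\wedge\mathrm{Trans}(\delta_2,s,a,\gamma,s'))$. $\mathrm{Final}(\alpha,s)\equiv\mathrm{False}$; $\mathrm{Final}(\phi?,s)\equiv\phi[s]$; $\mathrm{Final}(\delta_1;\delta_2,s)\equiv\mathrm{Final}(\delta_1,s)\wedge\mathrm{Final}(\delta_2,s)$; $\mathrm{Final}(\delta_1|\delta_2,s)\equiv\mathrm{Final}(\delta_1,s)\vee\mathrm{Final}(\delta_2,s)$; $\mathrm{Final}(\pi x.\delta,s)\equiv\exists v.\,\mathrm{Final}(\delta^x_v,s)$; $\mathrm{Final}(\delta^*,s)\equiv\mathrm{True}$; $\mathrm{Final}(\delta_1\|\delta_2,s)\equiv\mathrm{Final}(\delta_1,s)\wedge\mathrm{Final}(\delta_2,s)$. Algorithm 2 (input $\mathcal{D},\delta_0,K$): set $\mathit{Open}:=\{(S_0,\delta_0)\}$, $V:=\emptyset$, $E:=\emptyset$. While $\mathit{Open}\neq\emptyset$: remove some $(\sigma,\delta)$ from $\mathit{Open}$; let $\mathit{Acts}:=\{A(\vec\rho)\mid A\in\mathcal{A}\setminus\{\mathit{wait}\},\vec\rho\in\mathcal{O}^{|A|}\}\cup\{\mathit{wait}(\tau)\mid\tau\in\mathrm{TSuccs}(\nu_\sigma,K)\}$;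 for each $\alpha\in\mathit{Acts}$ and each $(\delta',\sigma')$ with $\mathcal{D}\models\mathrm{Trans}(\delta,\sigma,\alpha,\delta',\sigma')$: if $([\sigma']_{\approx_{\mathcal{D}K}},\delta')\notin V$, add it to $V$ and add $(\sigma',\delta')$ to $\mathit{Open}$; add the edge $(([\sigma]_{\approx_{\mathcal{D}K}},\delta),([\sigma']_{\approx_{\mathcal{D}K}},\delta'))$ to $E$. Return $(V,([S_0]_{\approx_{\mathcal{D}K}},\delta_0),E)$; its states are the elements of $V$ together with the initial state. *)

From Stdlib Require Import Reals List Bool Arith.
Import ListNotations.
Open Scope R_scope.

(* Signature of a clocked basic action theory: finitely many object    *)
(* constants (unique names + domain closure: the type Obj is exactly   *)
(* the set of object constants), finitely many action types besides    *)
(* wait, finitely many relational and functional fluents.              *)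
Record Signature := {
  Obj : Type;
  Obj_eq_dec : forall x y : Obj, {x = y} + {x <> y};
  objs : list Obj;
  objs_complete : forall o : Obj, In o objs;
  ActT : Type;
  ActT_eq_dec : forall x y : ActT, {x = y} + {x <> y};
  actTs : list ActT;
  actTs_complete : forall A : ActT, In A actTs;
  act_arity : ActT -> nat;
  RFl : Type;
  rfls : list RFl;
  rfls_complete : forall F : RFl, In F rfls;
  rfl_arity : RFl -> nat;
  FFl : Type;
  ffls : list FFl;
  ffls_complete : forall f : FFl, In f ffls;
  ffl_arity : FFl -> nat
}.

Section SitCalc.
Context {S : Signature}.

Inductive cmp := CLt | CLe | CEq | CGe | CGt.

Definition cmpb (c : cmp) (x y : R) : bool :=
  match c with
  | CLt => if Rlt_dec x y then true else false
  | CLe => if Rle_dec x y then true else false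
  | CEq => if Req_EM_T x y then true else false
  | CGe => if Rge_dec x y then true else false
  | CGt => if Rgt_dec x y then true else false
  end.

Inductive oterm := OVar (x : nat) | OCst (o : Obj S).

(* Situation-suppressed clocked formulas, uniform in the (suppressed)
   situation.  FActIs / FActWait are the atoms  a = A(ts)  and
   (exists t. a = wait(t))  about the action variable a of successor
   state axioms. *)
Inductive formula :=
  | FTrue | FFalse
  | FRel (F : RFl S) (ts : list oterm)
  | FEq (t1 t2 : oterm)
  | FClk (f : FFl S) (ts : list oterm) (c : cmp) (v : nat)
  | FNum (v : nat) (c : cmp) (v' : nat)
  | FActIs (A : ActT S) (ts : list oterm)
  | FActWait
  | FNot (p : formula)
  | FAnd (p q : formula)
  | FOr (p q : formula)
  | FEx (x : nat) (p : formula)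
  | FAll (x : nat) (p : formula).

Fixpoint time_independent (p : formula) : Prop :=
  match p with
  | FClk _ _ _ _ | FNum _ _ _ => False
  | FNot q | FEx _ q | FAll _ q => time_independent q
  | FAnd q r | FOr q r => time_independent q /\ time_independent r
  | _ => True
  end.

Fixpoint action_free (p : formula) : Prop :=
  match p with
  | FActIs _ _ | FActWait => False
  | FNot q | FEx _ q | FAll _ q => action_free q
  | FAnd q r | FOr q r => action_free q /\ action_free r
  | _ => True
  end.

Fixpoint consts (p : formula) : list nat :=
  match p with
  | FClk _ _ _ v => [v]
  | FNum v _ v' => [v; v']
  | FNot q | FEx _ q | FAll _ q => consts q
  | FAnd q r | FOr q r => consts q ++ consts r
  | _ => []
  end.

Inductive action := Act (A : ActT S) (os : list (Obj S)) | Wait (t : R).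

Definition situation := list action.
Definition S0 : situation := [].
Definition do_ (a : action) (s : situation) : situation := a :: s.

(* values of the fluents in a situation (in the unique model of D) *)
Record valuation := {
  rv : RFl S -> list (Obj S) -> bool;
  cv : FFl S -> list (Obj S) -> R
}.

Definition env := nat -> option (Obj S).
Definition upd (e : env) (x : nat) (o : Obj S) : env :=
  fun y => if Nat.eqb y x then Some o else e y.
Definition env_of (os : list (Obj S)) : env := fun i => nth_error os i.
Definition env_empty : env := fun _ => None.

Definition tval (e : env) (t : oterm) : option (Obj S) :=
  match t with OVar x => e x | OCst o => Some o end.

Fixpoint targs (e : env) (ts : list oterm) : option (list (Obj S)) :=
  match ts with
  | [] => Some []
  | t :: ts' =>
      match tval e t, targs e ts' with
      | Some o, Some os => Some (o :: os)
      | _, _ => None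
      end
  end.

Definition obj_eqb (x y : Obj S) : bool :=
  if Obj_eq_dec S x y then true else false.
Definition objs_eqb (x y : list (Obj S)) : bool :=
  if list_eq_dec (Obj_eq_dec S) x y then true else false.

(* truth value of a formula in valuation v, with current action act
   (the action variable a of an SSA), and object assignment e.
   Quantifiers range over the object constants (domain closure). *)
Fixpoint eval (v : valuation) (act : option action) (e : env) (p : formula)
  : bool :=
  match p with
  | FTrue => true
  | FFalse => false
  | FRel F ts => match targs e ts with Some os => rv v F os | None => false end
  | FEq t1 t2 =>
      match tval e t1, tval e t2 with
      | Some a, Some b => obj_eqb a b
      | _, _ => false
      end
  | FClk f ts c n =>
      match targs e ts with Some os => cmpb c (cv v f os) (INR n) | None => false end
  | FNum n c n' => cmpb c (INR n) (INR n')
  | FActIs A ts =>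
      match act, targs e ts with
      | Some (Act B os'), Some os =>
          (if ActT_eq_dec S A B then true else false) && objs_eqb os os'
      | _, _ => false
      end
  | FActWait => match act with Some (Wait _) => true | _ => false end
  | FNot q => negb (eval v act e q)
  | FAnd q r => eval v act e q && eval v act e r
  | FOr q r => eval v act e q || eval v act e r
  | FEx x q => existsb (fun o => eval v act (upd e x o) q) (objs S)
  | FAll x q => forallb (fun o => eval v act (upd e x o) q) (objs S)
  end.

End SitCalc.

Arguments formula S : clear implicits.
Arguments oterm S : clear implicits.
Arguments action S : clear implicits.
Arguments situation S : clear implicits.
Arguments valuation S : clear implicits.

(* A clocked BAT.  It is given by its axioms' right-hand sides:         *)
(*  - D_0 (complete information on relational fluents; every functional *)
(*    fluent is 0 at S0):            init F os                          *)
(*  - Poss(A(x_0..x_{n-1}), s) == poss A   (free vars 0..n-1),          *)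
(*    Poss(wait(t), s) == True                                           *)
(*  - F(x_0..x_{n-1}, do(a,s)) == ssa F   (free vars 0..n-1, action a)  *)
(*  - f(x, do(a,s)) = y == (exists t. a = wait(t) /\ y = f(x,s) + t)     *)
(*       \/ (not exists t. a = wait t) /\ (reset f /\ y = 0 \/           *)
(*                                        ~ reset f /\ y = f(x,s))        *)
Record ClockedBAT (S : Signature) := {
  init : RFl S -> list (Obj S) -> bool;
  poss : ActT S -> formula S;
  ssa : RFl S -> formula S;
  reset : FFl S -> formula S;
  poss_action_free : forall A, action_free (poss A);
  reset_time_independent : forall f, time_independent (reset f)
}.

Arguments init {S} _ _ _.
Arguments poss {S} _ _.
Arguments ssa {S} _ _.
Arguments reset {S} _ _.

Definition bat_consts_bounded {S : Signature} (D : ClockedBAT S) (K : nat) : Prop :=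
  (forall A n, In n (consts (poss D A)) -> (n <= K)%nat) /\
  (forall F n, In n (consts (ssa D F)) -> (n <= K)%nat) /\
  (forall f n, In n (consts (reset D f)) -> (n <= K)%nat).

Section Semantics.
Context {S : Signature} (D : ClockedBAT S).

Definition val0 : valuation S :=
  {| rv := init D; cv := fun _ _ => 0 |}.

Definition step_val (v : valuation S) (a : action S) : valuation S :=
  {| rv := fun F os => eval v (Some a) (env_of os) (ssa D F);
     cv := fun f os =>
       match a with
       | Wait t => cv v f os + t
       | Act _ _ => if eval v (Some a) (env_of os) (reset D f) then 0 else cv v f os
       end |}.

Fixpoint sval (s : situation S) : valuation S :=
  match s with
  | [] => val0
  | a :: s' => step_val (sval s') a
  end.

Definition holds (p : formula S) (s : situation S) : Prop :=
  eval (sval s) None env_empty p = true.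

Definition Poss (a : action S) (s : situation S) : Prop :=
  match a with
  | Act A os => eval (sval s) None (env_of os) (poss D A) = true
  | Wait _ => True
  end.

Definition clock := (FFl S * list (Obj S))%type.
Definition is_clock (w : clock) : Prop := length (snd w) = ffl_arity S (fst w).
Definition nu (s : situation S) : clock -> R := fun w => cv (sval s) (fst w) (snd w).
Definition shift (n : clock -> R) (t : R) : clock -> R := fun w => n w + t.

End Semantics.

Definition floorR (x : R) : R := IZR (Int_part x).
Definition ceilR (x : R) : R := - floorR (- x).

Definition simK (K : nat) (u v : R) : Prop :=
  (u > INR K /\ v > INR K) \/
  (u <= INR K /\ v <= INR K /\ floorR u = floorR v /\ ceilR u = ceilR v).

Definition fract (K : nat) (v : R) : R :=
  if Rle_dec v (INR K) then v - floorR v else 0.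

Definition region_eq {S : Signature} (K : nat) (n n' : @clock S -> R) : Prop :=
  (forall w, is_clock w -> simK K (n w) (n' w)) /\
  (forall w w', is_clock w -> is_clock w' ->
     (fract K (n w) <= fract K (n w') <-> fract K (n' w) <= fract K (n' w'))).

Definition approx {S : Signature} (D : ClockedBAT S) (K : nat) (s1 s2 : situation S) : Prop :=
  (forall F os, length os = rfl_arity S F -> rv (sval D s1) F os = rv (sval D s2) F os) /\
  region_eq K (nu D s1) (nu D s2).

Definition cls (S : Signature) := situation S -> Prop.
Definition eqclass {S : Signature} (D : ClockedBAT S) (K : nat) (s : situation S) : cls S :=
  fun s' => approx D K s s'.

(* TSuccs: any function with the required specification *)
Definition TSuccs_spec {S : Signature} (TS : (@clock S -> R) -> nat -> list R) : Prop :=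
  forall (n : @clock S -> R) (K : nat),
    (forall t, In t (TS n K) -> 0 <= t) /\
    (forall t, 0 <= t -> exists t', In t' (TS n K) /\ region_eq K (shift n t) (shift n t')).

Section Golog.
Context {S : Signature}.

Inductive prog :=
  | PAct (A : ActT S) (ts : list (oterm S))
  | PWait
  | PTest (p : formula S)
  | PSeq (d1 d2 : prog)
  | PChoice (d1 d2 : prog)
  | PPi (x : nat) (d : prog)
  | PStar (d : prog)
  | PConc (d1 d2 : prog).

Definition Pnil : prog := PTest FTrue.

Definition subst_t (x : nat) (o : Obj S) (t : oterm S) : oterm S :=
  match t with OVar y => if Nat.eqb y x then OCst o else t | OCst _ => t end.

Fixpoint subst_f (x : nat) (o : Obj S) (p : formula S) : formula S :=
  match p with
  | FRel F ts => FRel F (map (subst_t x o) ts)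
  | FEq t1 t2 => FEq (subst_t x o t1) (subst_t x o t2)
  | FClk f ts c v => FClk f (map (subst_t x o) ts) c v
  | FActIs A ts => FActIs A (map (subst_t x o) ts)
  | FNot q => FNot (subst_f x o q)
  | FAnd q r => FAnd (subst_f x o q) (subst_f x o r)
  | FOr q r => FOr (subst_f x o q) (subst_f x o r)
  | FEx y q => if Nat.eqb y x then p else FEx y (subst_f x o q)
  | FAll y q => if Nat.eqb y x then p else FAll y (subst_f x o q)
  | _ => p
  end.

Fixpoint subst_p (x : nat) (o : Obj S) (d : prog) : prog :=
  match d with
  | PAct A ts => PAct A (map (subst_t x o) ts)
  | PWait => PWait
  | PTest p => PTest (subst_f x o p)
  | PSeq d1 d2 => PSeq (subst_p x o d1) (subst_p x o d2)
  | PChoice d1 d2 => PChoice (subst_p x o d1) (subst_p x o d2)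
  | PPi y d1 => if Nat.eqb y x then d else PPi y (subst_p x o d1)
  | PStar d1 => PStar (subst_p x o d1)
  | PConc d1 d2 => PConc (subst_p x o d1) (subst_p x o d2)
  end.

Variable D : ClockedBAT S.

Inductive Final : prog -> situation S -> Prop :=
  | F_test p s : holds D p s -> Final (PTest p) s
  | F_seq d1 d2 s : Final d1 s -> Final d2 s -> Final (PSeq d1 d2) s
  | F_ch1 d1 d2 s : Final d1 s -> Final (PChoice d1 d2) s
  | F_ch2 d1 d2 s : Final d2 s -> Final (PChoice d1 d2) s
  | F_pi x d o s : Final (subst_p x o d) s -> Final (PPi x d) s
  | F_star d s : Final (PStar d) s
  | F_conc d1 d2 s : Final d1 s -> Final d2 s -> Final (PConc d1 d2) s.

Inductive Trans : prog -> situation S -> action S -> prog -> situation S -> Prop :=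
  | T_act A ts os s :
      targs env_empty ts = Some os -> Poss D (Act A os) s ->
      Trans (PAct A ts) s (Act A os) Pnil (do_ (Act A os) s)
  | T_wait t s : Trans PWait s (Wait t) Pnil (do_ (Wait t) s)
  | T_seq1 d1 d2 s a g s' :
      Trans d1 s a g s' -> Trans (PSeq d1 d2) s a (PSeq g d2) s'
  | T_seq2 d1 d2 s a d' s' :
      Final d1 s -> Trans d2 s a d' s' -> Trans (PSeq d1 d2) s a d' s'
  | T_ch1 d1 d2 s a d' s' : Trans d1 s a d' s' -> Trans (PChoice d1 d2) s a d' s'
  | T_ch2 d1 d2 s a d' s' : Trans d2 s a d' s' -> Trans (PChoice d1 d2) s a d' s'
  | T_pi x d o s a d' s' : Trans (subst_p x o d) s a d' s' -> Trans (PPi x d) s a d' s'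
  | T_star d s a g s' : Trans d s a g s' -> Trans (PStar d) s a (PSeq g (PStar d)) s'
  | T_conc1 d1 d2 s a g s' :
      Trans d1 s a g s' -> Trans (PConc d1 d2) s a (PConc g d2) s'
  | T_conc2 d1 d2 s a g s' :
      Trans d2 s a g s' -> Trans (PConc d1 d2) s a (PConc d1 g) s'.

End Golog.

Arguments prog S : clear implicits.

(* Algorithm 2, as a (nondeterministic) small-step transition relation *)
(* on configurations.  The inner loop over alpha in Acts and over    *)
(* the pairs with Trans processes the successors of the selected  *)
(* node one at a time (in any order).                                  *)
Section Algorithm2.
Context {S : Signature} (D : ClockedBAT S) (K : nat)
        (TS : (@clock S -> R) -> nat -> list R).

Definition state := (cls S * prog S)%type.

Definition in_Acts (s : situation S) (a : action S) : Prop :=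
  (exists A os, a = Act A os /\ length os = act_arity S A) \/
  (exists t, a = Wait t /\ In t (TS (nu D s) K)).

Record config := {
  Open : list (situation S * prog S);
  V : list state;
  E : list (state * state);
  (* Some (s, d, done): node (s,d) being expanded, successors in done
     already processed; None: between iterations of the while loop *)
  cur : option (situation S * prog S * list (action S * prog S * situation S))
}.

Definition init_config (d0 : prog S) : config :=
  {| Open := [(S0, d0)]; V := []; E := []; cur := None |}.

Inductive alg_step : config -> config -> Prop :=
  | step_select l1 l2 s d v e :
      alg_step {| Open := l1 ++ (s, d) :: l2; V := v; E := e; cur := None |}
               {| Open := l1 ++ l2; V := v; E := e; cur := Some (s, d, []) |}
  | step_old o v e s d dn a d' s' :
      in_Acts s a -> Trans D d s a d' s' -> ~ In (a, d', s') dn ->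
      In (eqclass D K s', d') v ->
      alg_step {| Open := o; V := v; E := e; cur := Some (s, d, dn) |}
               {| Open := o; V := v;
                  E := ((eqclass D K s, d), (eqclass D K s', d')) :: e;
                  cur := Some (s, d, (a, d', s') :: dn) |}
  | step_new o v e s d dn a d' s' :
      in_Acts s a -> Trans D d s a d' s' -> ~ In (a, d', s') dn ->
      ~ In (eqclass D K s', d') v ->
      alg_step {| Open := o; V := v; E := e; cur := Some (s, d, dn) |}
               {| Open := (s', d') :: o; V := (eqclass D K s', d') :: v;
                  E := ((eqclass D K s, d), (eqclass D K s', d')) :: e;
                  cur := Some (s, d, (a, d', s') :: dn) |}
  | step_done o v e s d dn :
      (forall a d' s', in_Acts s a -> Trans D d s a d' s' -> In (a, d', s') dn) ->
      alg_step {| Open := o; V := v; E := e; cur := Some (s, d, dn) |}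
               {| Open := o; V := v; E := e; cur := None |}.

Inductive reachable (d0 : prog S) : config -> Prop :=
  | reach_init : reachable d0 (init_config d0)
  | reach_step c c' : reachable d0 c -> alg_step c c' -> reachable d0 c'.

Definition is_state_of (d0 : prog S) (c : config) (st : state) : Prop :=
  st = (eqclass D K S0, d0) \/ In st (V c).

End Algorithm2.

(** Two observations make the state space finite.  First, every program
    reachable from [delta] by [Trans] steps is a residual of [delta]: these
    are obtained by replacing a subprogram by [nil], unfolding a star once,
    or instantiating a [pi] with one of the finitely many objects, so they
    form a finite list computed by recursion on the nesting depth.  Second,
    all clocks stay nonnegative along runs of Algorithm 2 (every [wait]
    argument comes from [TSuccs]), and the class of a situation with
    nonnegative clocks is determined by finitely much data: the truth values
    of the finitely many ground relational atoms, for each of the finitely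
    many ground clocks either "above K" or its floor and ceiling in
    [0, K], and the order of the fractional parts.  The bound on [K] is
    what makes Algorithm 2 compute a bisimulation quotient. *)

From Stdlib Require Import Reals List.
From Stdlib Require Import Lia Lra.
From Stdlib Require Import Classical FunctionalExtensionality PropExtensionality.
Import ListNotations.

Lemma finite_image_of_finite_key {X Y Z : Type} (P : X -> Prop)
    (k : X -> Y) (g : X -> Z) (ks : list Y) :
  (forall x, P x -> In (k x) ks) ->
  (forall x x', P x -> P x' -> k x = k x' -> g x = g x') ->
  exists L, forall x, P x -> In (g x) L.
Proof.
  revert P; induction ks as [|y ks IH]; intros P Hk Hg.
  - exists []; intros x Hx; exact (Hk x Hx).
  - destruct (IH (fun x => P x /\ k x <> y)) as [L HL].
    { intros x [Hx Hy]; destruct (Hk x Hx); [congruence | assumption]. }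
    { intros x x' [Hx _] [Hx' _]; apply Hg; assumption. }
    destruct (classic (exists x0, P x0 /\ k x0 = y)) as [[x0 [Hx0 Hy]] | Hnone].
    + exists (g x0 :: L); intros x Hx.
      destruct (classic (k x = y)) as [Hxy | Hxy].
      * left; apply Hg; congruence.
      * right; apply HL; split; assumption.
    + exists L; intros x Hx; apply HL; split; [assumption |].
      intros Hxy; apply Hnone; exists x; split; assumption.
Qed.

Fixpoint all_tuples {A : Type} (xs : list A) (n : nat) : list (list A) :=
  match n with
  | O => [[]]
  | S n => flat_map (fun x => map (cons x) (all_tuples xs n)) xs
  end.

Lemma in_all_tuples {A : Type} (xs l : list A) :
  (forall x, In x l -> In x xs) -> In l (all_tuples xs (length l)).
Proof.
  induction l as [|x l IH]; simpl; intros H; [auto |].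
  apply in_flat_map; exists x; split; auto using in_map.
Qed.

Lemma bool_in_both (b : bool) : In b [true; false].
Proof. destruct b; simpl; auto. Qed.

Section Programs.
Context {Sg : Signature} (D : ClockedBAT Sg).

Fixpoint depth (d : prog Sg) : nat :=
  match d with
  | PSeq d1 d2 | PChoice d1 d2 | PConc d1 d2 => S (Nat.max (depth d1) (depth d2))
  | PPi _ d1 | PStar d1 => S (depth d1)
  | _ => O
  end.

Lemma depth_subst_p x o d : depth (subst_p x o d) = depth d.
Proof.
  induction d; simpl; auto.
  destruct (Nat.eqb x0 x); simpl; auto.
Qed.

(* The fuel [n] only has to exceed [depth d]: substitution does not decrease
   the program structurally but preserves its depth. *)
Fixpoint residuals (n : nat) (d : prog Sg) : list (prog Sg) :=
  match n with
  | O => [d]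
  | S n =>
    match d with
    | PAct A ts => [PAct A ts; Pnil]
    | PWait => [PWait; Pnil]
    | PTest p => [PTest p]
    | PSeq d1 d2 => map (fun g => PSeq g d2) (residuals n d1) ++ residuals n d2
    | PChoice d1 d2 => PChoice d1 d2 :: residuals n d1 ++ residuals n d2
    | PPi x d1 => PPi x d1 :: flat_map (fun o => residuals n (subst_p x o d1)) (objs Sg)
    | PStar d1 => PStar d1 :: map (fun g => PSeq g (PStar d1)) (residuals n d1)
    | PConc d1 d2 =>
        flat_map (fun g1 => map (PConc g1) (residuals n d2)) (residuals n d1)
    end
  end.

Lemma residuals_self n d : In d (residuals n d).
Proof.
  revert d; induction n as [|n IH]; intros d; [left; reflexivity |].
  destruct d; simpl; auto.
  - apply in_or_app; left; apply (in_map (fun g => PSeq g d2)), IH.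
  - apply in_flat_map; exists d1; split; [apply IH | apply (in_map (PConc d1)), IH].
Qed.

Lemma residuals_Trans_closed n d :
  (depth d < n)%nat ->
  forall e s a e' s', In e (residuals n d) -> Trans D e s a e' s' ->
  In e' (residuals n d).
Proof.
  revert d; induction n as [|n IH]; intros d Hd; [lia |].
  destruct d as [A ts | | p | d1 d2 | d1 d2 | x d1 | d1 | d1 d2]; simpl in Hd |- *;
    intros e s a e' s' He HT.
  - destruct He as [<- | [<- | []]]; inversion HT; simpl; auto.
  - destruct He as [<- | [<- | []]]; inversion HT; simpl; auto.
  - destruct He as [<- | []]; inversion HT.
  - assert (C1 := IH d1 ltac:(lia)); assert (C2 := IH d2 ltac:(lia)).
    apply in_app_or in He as [He | He]; apply in_or_app.
    + apply in_map_iff in He as [g [<- Hg]].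
      inversion HT; subst; [left; apply in_map_iff | right]; eauto using residuals_self.
    + right; eauto.
  - assert (C1 := IH d1 ltac:(lia)); assert (C2 := IH d2 ltac:(lia)).
    right; apply in_or_app; destruct He as [<- | He].
    + inversion HT; subst; [left | right]; eauto using residuals_self.
    + apply in_app_or in He as [He | He]; [left | right]; eauto.
  - assert (C : forall o, (depth (subst_p x o d1) < n)%nat) by
      (intros o; rewrite depth_subst_p; lia).
    right; apply in_flat_map; destruct He as [<- | He].
    + inversion HT; subst.
      exists o; split; [apply objs_complete |]; eauto using residuals_self.
    + apply in_flat_map in He as [o [Ho He]]; exists o; split; [| eapply IH]; eauto.
  - assert (C1 := IH d1 ltac:(lia)).
    right; apply in_map_iff; destruct He as [<- | He].
    + inversion HT; subst; eauto using residuals_self.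
    + apply in_map_iff in He as [g [<- Hg]].
      inversion HT as [| | ? ? ? ? ? ? HT1 | ? ? ? ? ? ? _ HT2 | | | | | |]; subst.
      * eauto.
      * inversion HT2; subst; eauto using residuals_self.
  - assert (C1 := IH d1 ltac:(lia)); assert (C2 := IH d2 ltac:(lia)).
    apply in_flat_map in He as [g1 [Hg1 He]]; apply in_map_iff in He as [g2 [<- Hg2]].
    apply in_flat_map; inversion HT; subst.
    + exists g; split; [| apply in_map]; eauto.
    + exists g1; split; [| apply in_map]; eauto.
Qed.

Lemma Trans_situation d s a d' s' : Trans D d s a d' s' -> s' = do_ a s.
Proof. induction 1; auto. Qed.

End Programs.

Definition ints_between (a b : Z) : list Z :=
  map (fun i => (a + Z.of_nat i)%Z) (seq 0 (S (Z.to_nat (b - a)))).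

Lemma in_ints_between a b z : (a <= z <= b)%Z -> In z (ints_between a b).
Proof.
  intros H; apply in_map_iff; exists (Z.to_nat (z - a)); split; [lia |].
  apply in_seq; lia.
Qed.

Lemma Int_part_between (a b : Z) (u : R) :
  IZR a <= u <= IZR b -> (a <= Int_part u <= b)%Z.
Proof.
  intros [Ha Hb]; destruct (base_Int_part u) as [Hlo Hhi]; split.
  - apply Z.lt_succ_r, lt_IZR; rewrite succ_IZR; lra.
  - apply le_IZR; lra.
Qed.

Section Regions.
Context {Sg : Signature} (D : ClockedBAT Sg) (K : nat).

Definition ground_clocks : list (@clock Sg) :=
  flat_map (fun f => map (pair f) (all_tuples (objs Sg) (ffl_arity Sg f))) (ffls Sg).

Definition ground_atoms : list (RFl Sg * list (Obj Sg)) :=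
  flat_map (fun F => map (pair F) (all_tuples (objs Sg) (rfl_arity Sg F))) (rfls Sg).

Lemma in_all_object_tuples (os : list (Obj Sg)) :
  In os (all_tuples (objs Sg) (length os)).
Proof. apply in_all_tuples; intros; apply objs_complete. Qed.

Lemma in_ground_clocks w : is_clock w -> In w ground_clocks.
Proof.
  destruct w as [f os]; unfold is_clock; simpl; intros Hos.
  apply in_flat_map; exists f; split; [apply ffls_complete |].
  rewrite <- Hos; apply in_map, in_all_object_tuples.
Qed.

Lemma in_ground_atoms F os : length os = rfl_arity Sg F -> In (F, os) ground_atoms.
Proof.
  intros Hos; apply in_flat_map; exists F; split; [apply rfls_complete |].
  rewrite <- Hos; apply in_map, in_all_object_tuples.
Qed.

(* [Int_part (- u)] is minus the ceiling of [u]. *)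
Definition clock_code (u : R) : option (Z * Z) :=
  if Rle_dec u (INR K) then Some (Int_part u, Int_part (- u)) else None.

Definition clock_codes : list (option (Z * Z)) :=
  None :: map Some (list_prod (ints_between 0 (Z.of_nat K)) (ints_between (- Z.of_nat K) 0)).

Lemma clock_code_simK u v : clock_code u = clock_code v -> simK K u v.
Proof.
  unfold clock_code, simK, ceilR, floorR.
  destruct (Rle_dec u (INR K)), (Rle_dec v (INR K)); intros H; try discriminate.
  - injection H as Hfloor Hceil; right; rewrite Hfloor, Hceil; auto.
  - left; lra.
Qed.

Lemma clock_code_in u : 0 <= u -> In (clock_code u) clock_codes.
Proof.
  intros Hu; unfold clock_code; destruct (Rle_dec u (INR K)) as [HK | _]; [| left; auto].
  rewrite INR_IZR_INZ in HK.
  right; apply in_map, in_prod; apply in_ints_between, Int_part_between;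
    rewrite ?opp_IZR; lra.
Qed.

Definition fract_leb (u v : R) : bool :=
  if Rle_dec (fract K u) (fract K v) then true else false.

Definition region_key (s : situation Sg) :=
  (map (fun A => rv (sval D s) (fst A) (snd A)) ground_atoms,
   map (fun w => clock_code (nu D s w)) ground_clocks,
   map (fun ww => fract_leb (nu D s (fst ww)) (nu D s (snd ww)))
       (list_prod ground_clocks ground_clocks)).

Definition region_keys :=
  list_prod
    (list_prod (all_tuples [true; false] (length ground_atoms))
               (all_tuples clock_codes (length ground_clocks)))
    (all_tuples [true; false] (length (list_prod ground_clocks ground_clocks))).

Definition clocks_nonneg (s : situation Sg) : Prop := forall w, 0 <= nu D s w.

Lemma region_key_in s : clocks_nonneg s -> In (region_key s) region_keys.
Proof.
  intros Hs; unfold region_key, region_keys.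
  apply in_prod; [apply in_prod |].
  - rewrite <- (length_map (fun A => rv (sval D s) (fst A) (snd A)) ground_atoms).
    apply in_all_tuples; intros b _; apply bool_in_both.
  - rewrite <- (length_map (fun w => clock_code (nu D s w)) ground_clocks).
    apply in_all_tuples; intros c Hc.
    apply in_map_iff in Hc as [w [<- _]]; apply clock_code_in, Hs.
  - rewrite <- (length_map (fun ww => fract_leb (nu D s (fst ww)) (nu D s (snd ww)))
                           (list_prod ground_clocks ground_clocks)).
    apply in_all_tuples; intros b _; apply bool_in_both.
Qed.

Lemma region_key_approx s s' : region_key s = region_key s' -> approx D K s s'.
Proof.
  unfold region_key; intros H; injection H as Hatoms Hcodes Hfract.
  split; [| split].
  - intros F os Hos; apply (proj1 map_ext_in_iff Hatoms (F, os)), in_ground_atoms, Hos.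
  - intros w Hw; apply clock_code_simK, (proj1 map_ext_in_iff Hcodes w), in_ground_clocks, Hw.
  - intros w w' Hw Hw'.
    assert (Hin : In (w, w') (list_prod ground_clocks ground_clocks))
      by (apply in_prod; apply in_ground_clocks; assumption).
    pose proof (proj1 map_ext_in_iff Hfract _ Hin) as E; simpl in E; unfold fract_leb in E.
    destruct (Rle_dec (fract K (nu D s w)) (fract K (nu D s w'))),
             (Rle_dec (fract K (nu D s' w)) (fract K (nu D s' w')));
      try discriminate; tauto.
Qed.

Lemma simK_sym u v : simK K u v -> simK K v u.
Proof. unfold simK; intros [H | H]; [left; lra | right; intuition]. Qed.

Lemma simK_trans u v w : simK K u v -> simK K v w -> simK K u w.
Proof.
  unfold simK; intros [H | H] [H' | H']; try (left; lra); try (exfalso; lra).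
  right; intuition congruence.
Qed.

Lemma approx_sym s s' : approx D K s s' -> approx D K s' s.
Proof.
  intros [Hrel [Hsim Hord]]; split; [| split].
  - intros; symmetry; auto.
  - intros; apply simK_sym; auto.
  - intros w w' Hw Hw'; specialize (Hord w w' Hw Hw'); tauto.
Qed.

Lemma approx_trans s s' s'' : approx D K s s' -> approx D K s' s'' -> approx D K s s''.
Proof.
  intros [Hrel [Hsim Hord]] [Hrel' [Hsim' Hord']]; split; [| split].
  - intros; rewrite Hrel; auto.
  - intros; eapply simK_trans; eauto.
  - intros w w' Hw Hw'; specialize (Hord w w' Hw Hw'); specialize (Hord' w w' Hw Hw'); tauto.
Qed.

Lemma eqclass_eq s s' : approx D K s s' -> eqclass D K s = eqclass D K s'.
Proof.
  intros H; apply functional_extensionality; intros x; unfold eqclass.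
  apply propositional_extensionality; split; intros Hx.
  - exact (approx_trans _ _ _ (approx_sym _ _ H) Hx).
  - exact (approx_trans _ _ _ H Hx).
Qed.

End Regions.

Section Runs.
Context {Sg : Signature} (D : ClockedBAT Sg) (K : nat)
        (TS : (@clock Sg -> R) -> nat -> list R) (HTS : TSuccs_spec TS)
        (delta : prog Sg).

Definition node_ok (s : situation Sg) (d : prog Sg) : Prop :=
  clocks_nonneg D s /\ In d (residuals (S (depth delta)) delta).

Definition config_ok (c : config) : Prop :=
  (forall s d, In (s, d) (Open c) -> node_ok s d) /\
  (forall st, In st (V c) -> exists s d, st = (eqclass D K s, d) /\ node_ok s d) /\
  match cur c with Some (s, d, _) => node_ok s d | None => True end.

Lemma node_ok_initial : node_ok S0 delta.
Proof. split; [intros w; unfold nu; simpl; lra | apply residuals_self]. Qed.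

Lemma clocks_nonneg_step s a :
  clocks_nonneg D s -> in_Acts D K TS s a -> clocks_nonneg D (do_ a s).
Proof.
  intros Hs Ha w; specialize (Hs w); unfold nu in *; simpl.
  destruct a as [A os | t].
  - destruct (eval _ _ _ _); lra.
  - destruct Ha as [[A [os [E _]]] | [t' [E Ht]]]; [discriminate |].
    injection E as <-; pose proof (proj1 (HTS (nu D s) K) t Ht); lra.
Qed.

Lemma node_ok_successor s d a d' s' :
  node_ok s d -> in_Acts D K TS s a -> Trans D d s a d' s' -> node_ok s' d'.
Proof.
  intros [Hs Hd] Ha HT; rewrite (Trans_situation D _ _ _ _ _ HT); split.
  - apply clocks_nonneg_step; assumption.
  - eapply residuals_Trans_closed; eauto.
Qed.

Lemma config_ok_step c c' : config_ok c -> alg_step D K TS c c' -> config_ok c'.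
Proof.
  intros Hok Hstep.
  destruct Hstep as [l1 l2 s d v e | o v e s d dn a d' s' Ha HT _ _
                    | o v e s d dn a d' s' Ha HT _ _ | o v e s d dn _];
    destruct Hok as [HOpen [HV Hcur]]; simpl in *.
  - split; [| split]; simpl; auto.
    + intros s' d' Hin; apply HOpen, in_or_app.
      apply in_app_or in Hin as [Hin | Hin]; [left | right; right]; assumption.
    + apply HOpen, in_or_app; right; left; reflexivity.
  - split; [| split]; assumption.
  - assert (Hnew : node_ok s' d') by (eapply node_ok_successor; eauto).
    split; [| split]; simpl; auto.
    + intros s1 d1 [[= <- <-] | Hin]; auto.
    + intros st [<- | Hin]; eauto.
  - split; [| split]; simpl; auto.
Qed.

Lemma reachable_config_ok c : reachable D K TS delta c -> config_ok c.
Proof.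
  induction 1 as [| c c' _ IH Hstep]; [| exact (config_ok_step _ _ IH Hstep)].
  split; [| split]; simpl; [| contradiction | exact I].
  intros s d [[= <- <-] | []]; apply node_ok_initial.
Qed.

Lemma state_of_reachable c st :
  reachable D K TS delta c -> is_state_of D K delta c st ->
  exists s d, st = (eqclass D K s, d) /\ node_ok s d.
Proof.
  intros Hc [-> | Hst].
  - exists S0, delta; split; [reflexivity | apply node_ok_initial].
  - exact (proj1 (proj2 (reachable_config_ok c Hc)) st Hst).
Qed.

Lemma node_classes_finite :
  exists Fin, forall s d, node_ok s d -> In (eqclass D K s, d) Fin.
Proof.
  destruct (finite_image_of_finite_key (fun sd => node_ok (fst sd) (snd sd))
              (fun sd => (region_key D K (fst sd), snd sd))
              (fun sd => (eqclass D K (fst sd), snd sd))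
              (list_prod (@region_keys Sg K) (residuals (S (depth delta)) delta)))
    as [Fin HFin].
  - intros [s d] [Hs Hd]; apply in_prod; [apply region_key_in |]; assumption.
  - intros [s d] [s' d'] _ _ Heq; apply pair_equal_spec in Heq as [Hkey ->]; simpl.
    rewrite (eqclass_eq D K s s' (region_key_approx D K s s' Hkey)); reflexivity.
  - exists Fin; intros s d Hsd; exact (HFin (s, d) Hsd).
Qed.

End Runs.

Theorem lemma9 (S : Signature) (D : ClockedBAT S) (delta : prog S) (K : nat)
  (TS : (@clock S -> R) -> nat -> list R)
  (HTS : TSuccs_spec TS)
  (HK : bat_consts_bounded D K) :
  exists Fin : list (state (S := S)),
    forall c : config (S := S),
      reachable D K TS delta c ->
      forall st, is_state_of D K delta c st -> In st Fin.
Proof.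
  destruct (node_classes_finite D K delta) as [Fin HFin].
  exists Fin; intros c Hc st Hst.
  destruct (state_of_reachable D K TS HTS delta c st Hc Hst) as [s [d [-> Hsd]]].
  apply HFin, Hsd.
Qed.
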